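(* Let $D,E$ be $\mathcal{G}$-spaces and $L>0$. The mapping which takes $(\psi,x_1,x_2)\in\mathcal{G}(L,\ell_1+\ell_2)\times D(\ell_1)\times E(\ell_2)$ to the equivalence class of $(\psi_2\otimes\psi_1,x_2,x_1)$ in $(E\otimes D)(L)$, where $\psi=\psi_1\otimes\psi_2$ is the unique decomposition with $\psi_i\in\mathcal{G}(\ell'_i,\ell_i)$ and $\ell'_1+\ell'_2=L$, induces a continuous map $B:(D\otimes E)(L)\to(E\otimes D)(L)$ which is a homeomorphism. This family of homeomorphisms is not natural with respect to $L>0$.
   Context: $\mathcal{G}$ is the category whose objects are the real numbers $\ell>0$, with $\mathcal{G}(\ell_1,\ell_2)$ the set of nondecreasing homeomorphisms $[0,\ell_1]\to[0,\ell_2]$, equipped with the compact-open topology, composition given by composition of maps. For $\phi_i:[0,\ell_i]\to[0,\ell'_i]$, $\phi_1\otimes\phi_2:[0,\ell_1+\ell_2]\to[0,\ell'_1+\ell'_2]$ is $\phi_1(t)$ for $0\le t\le\ell_1$ and $\phi_2(t-\ell_1)+\ell'_1$ for $\ell_1\le t\le\ell_1+\ell_2$. Every $\psi\in\mathcal{G}(L,\ell_1+\ell_2)$ decomposes uniquely as $\psi_1\otimes\psi_2$ as described. All spaces are ($\Delta$-generated) topological spaces. A $\mathcal{G}$-space is an enriched (continuous) functor $D:\mathcal{G}^{op}\to\mathbf{Top}$; write $x\phi=D(\phi)(x)$. The tensor product $D\otimes E=\int^{(\ell_1,\ell_2)}\mathcal{G}(-,\ell_1+\ell_2)\times D(\ell_1)\times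 E(\ell_2)$; concretely $(D\otimes E)(L)$ is the quotient of $\bigsqcup_{(\ell_1,\ell_2)}\mathcal{G}(L,\ell_1+\ell_2)\times D(\ell_1)\times E(\ell_2)$ by the identifications $(\psi,x_1\phi_1,x_2\phi_2)\sim((\phi_1\otimes\phi_2)\psi,x_1,x_2)$, and a map $\omega:L'\to L$ acts by $(\psi,x_1,x_2)\mapsto(\psi\omega,x_1,x_2)$. Naturality in $L$ would mean compatibility of $B$ with these actions of $\mathcal{G}$ on $D\otimes E$ and $E\otimes D$. *)

From HB Require Import structures.
From mathcomp Require Import all_boot all_order all_algebra.
From mathcomp Require Import all_classical all_reals all_analysis.
From Stdlib Require Import Relations.Relation_Operators.
Set Implicit Arguments. Unset Strict Implicit. Unset Printing Implicit Defensive.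
Import Order.TTheory GRing.Theory Num.Theory.
Import numFieldTopology.Exports.
Local Open Scope classical_set_scope.
Local Open Scope ring_scope.

Definition cont (A B : Type) (oA : set (set A)) (oB : set (set B)) (f : A -> B) :=
  forall U, oB U -> oA (f @^-1` U).

Definition homeo (A B : Type) (oA : set (set A)) (oB : set (set B)) (f : A -> B) :=
  exists g : B -> A, cancel f g /\ cancel g f /\ cont oA oB f /\ cont oB oA g.

Definition gen_top (T : Type) (S : set (set T)) : set (set T) :=
  fun A => forall x, A x -> exists n (F : 'I_n -> set T),
    (forall i, S (F i)) /\ (forall i, F i x) /\ (forall y, (forall i, F i y) -> A y).

Section Delta.
Variable R : realType.

Definition simplex (n : nat) : set 'rV[R]_n.+1 :=
  [set x | (forall i, 0 <= x ord0 i) /\ \sum_i x ord0 i = 1].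

(* sigma : Delta^n -> X is continuous for the subspace topology on Delta^n *)
Definition simplex_cont (X : Type) (tau : set (set X)) (n : nat)
    (sigma : 'rV[R]_n.+1 -> X) :=
  forall U, tau U -> exists V : set 'rV[R]_n.+1,
    open V /\ (forall x, simplex x -> (U (sigma x) <-> V x)).

(* Delta-ification: the final topology w.r.t. all continuous maps from simplices *)
Definition deltaify (X : Type) (tau : set (set X)) : set (set X) :=
  fun U => forall n (sigma : 'rV[R]_n.+1 -> X), simplex_cont tau sigma ->
    exists V : set 'rV[R]_n.+1, open V /\ (forall x, simplex x -> (U (sigma x) <-> V x)).

Definition delta_generated (X : topologicalType) :=
  deltaify (@open X) = @open X.

(* A morphism l1 -> l2 (nondecreasing homeomorphism [0,l1] -> [0,l2]) *)
(* is represented by a function R -> R, normalised so that it is      *)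
(* determined by its values on [0,l1] (f t = f (clamp t)).            *)

Definition clampR (a t : R) : R := Num.min a (Num.max 0 t).

Definition isGmor (a b : R) (f : R -> R) : Prop :=
  (forall t, f t = f (clampR a t)) /\
  (forall t, 0 <= t <= a -> 0 <= f t <= b) /\
  (forall s t, 0 <= s <= a -> 0 <= t <= a -> s <= t -> f s <= f t) /\
  {within [set t | 0 <= t <= a], continuous f} /\
  exists g : R -> R,
    (forall u, 0 <= u <= b -> 0 <= g u <= a) /\
    (forall t, 0 <= t <= a -> g (f t) = t) /\
    (forall u, 0 <= u <= b -> f (g u) = u) /\
    {within [set u | 0 <= u <= b], continuous g}.

Definition Gm (a b : R) := {f : R -> R | isGmor a b f}.

Definition co_subbasis (a b : R) : set (set (Gm a b)) :=
  [set S | exists (K V : set R), compact K /\ K `<=` [set t | 0 <= t <= a] /\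
     open V /\ S = [set f : Gm a b | forall t, K t -> (V `&` [set u | 0 <= u <= b]) (sval f t)]].

Definition Gtop (a b : R) : set (set (Gm a b)) := deltaify (gen_top (@co_subbasis a b)).

(* tensor: phi1 (x) phi2 with phi1 : [0,l1] -> [0,l1'] *)
Definition tens (l1 l1' : R) (f g : R -> R) (t : R) : R :=
  if t <= l1 then f t else g (t - l1) + l1'.

(* products (in Delta-generated spaces: Delta-ification of the product topology) *)
Definition prod2_top (A B : Type) (oA : set (set A)) (oB : set (set B)) : set (set (A * B)) :=
  deltaify (gen_top [set S | (exists U, oA U /\ S = [set p | U p.1]) \/
                             (exists U, oB U /\ S = [set p | U p.2])]).

Definition prod3_top (A B C : Type) (oA : set (set A)) (oB : set (set B)) (oC : set (set C))
  : set (set (A * B * C)) :=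
  deltaify (gen_top [set S | (exists U, oA U /\ S = [set p | U p.1.1]) \/
                             (exists U, oB U /\ S = [set p | U p.1.2]) \/
                             (exists U, oC U /\ S = [set p | U p.2])]).

(* G-spaces: continuous functors G^op -> Top (Delta-generated)          *)
Record GSpace := {
  gsp : {posnum R} -> topologicalType;
  gact : forall l1 l2 : {posnum R}, gsp l2 -> Gm l1%:num l2%:num -> gsp l1;
  gsp_delta : forall l, delta_generated (gsp l);
  gact_id : forall (l : {posnum R}) (x : gsp l) (chi : Gm l%:num l%:num),
    (forall t, 0 <= t <= l%:num -> sval chi t = t) -> gact x chi = x;
  gact_comp : forall (l1 l2 l3 : {posnum R}) (x : gsp l3)
    (phi : Gm l2%:num l3%:num) (psi : Gm l1%:num l2%:num) (chi : Gm l1%:num l3%:num),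
    (forall t, sval chi t = sval phi (sval psi t)) ->
    gact x chi = gact (gact x phi) psi;
  gact_cont : forall l1 l2 : {posnum R},
    cont (prod2_top (@open (gsp l2)) (@Gtop l1%:num l2%:num)) (@open (gsp l1))
         (fun p => gact p.1 p.2)
}.

Definition fib (D E : GSpace) (L : {posnum R}) (l : {posnum R} * {posnum R}) :=
  (Gm L%:num (l.1%:num + l.2%:num) * gsp D l.1 * gsp E l.2)%type.

Definition Raw (D E : GSpace) (L : {posnum R}) := {l : {posnum R} * {posnum R} & fib D E L l}.

Definition mkRaw (D E : GSpace) (L l1 l2 : {posnum R})
  (psi : Gm L%:num (l1%:num + l2%:num)) (x1 : gsp D l1) (x2 : gsp E l2) : Raw D E L :=
  existT (fib D E L) (l1, l2) (psi, x1, x2).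

Inductive cstep (D E : GSpace) (L : {posnum R}) : Raw D E L -> Raw D E L -> Prop :=
| CStep (m1 m2 l1 l2 : {posnum R}) (phi1 : Gm m1%:num l1%:num) (phi2 : Gm m2%:num l2%:num)
    (psi : Gm L%:num (m1%:num + m2%:num)) (psi' : Gm L%:num (l1%:num + l2%:num))
    (x1 : gsp D l1) (x2 : gsp E l2) :
    (forall t, sval psi' t = tens m1%:num l1%:num (sval phi1) (sval phi2) (sval psi t)) ->
    cstep (mkRaw psi (gact x1 phi1) (gact x2 phi2)) (mkRaw psi' x1 x2).

Definition ceqv (D E : GSpace) (L : {posnum R}) : Raw D E L -> Raw D E L -> Prop :=
  Relation_Operators.clos_refl_sym_trans _ (@cstep D E L).

Definition quot (T : Type) (r : T -> T -> Prop) := {S : set T | exists x, S = r x}.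
Definition qproj (T : Type) (r : T -> T -> Prop) (x : T) : quot r :=
  exist _ (r x) (ex_intro _ x erefl).

Definition TensG (D E : GSpace) (L : {posnum R}) := quot (@ceqv D E L).
Definition tproj (D E : GSpace) (L : {posnum R}) (r : Raw D E L) : TensG D E L :=
  qproj (@ceqv D E L) r.

(* topology: coproduct over (l1,l2) of the Delta-products, then quotient *)
Definition raw_top (D E : GSpace) (L : {posnum R}) : set (set (Raw D E L)) :=
  fun U => forall l : {posnum R} * {posnum R},
    prod3_top (@Gtop L%:num (l.1%:num + l.2%:num)) (@open (gsp D l.1)) (@open (gsp E l.2))
      [set p | U (existT (fib D E L) l p)].

Definition tens_top (D E : GSpace) (L : {posnum R}) : set (set (TensG D E L)) :=
  fun U => raw_top (@tproj D E L @^-1` U).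

Definition induced_by_swap (D E : GSpace) (L : {posnum R})
    (B : TensG D E L -> TensG E D L) :=
  forall (l1 l2 m1 m2 : {posnum R}) (psi : Gm L%:num (l1%:num + l2%:num))
    (x1 : gsp D l1) (x2 : gsp E l2) (psi1 psi2 : R -> R)
    (psi' : Gm L%:num (l2%:num + l1%:num)),
    m1%:num + m2%:num = L%:num ->
    isGmor m1%:num l1%:num psi1 -> isGmor m2%:num l2%:num psi2 ->
    (forall t, sval psi t = tens m1%:num l1%:num psi1 psi2 t) ->
    (forall t, sval psi' t = tens m2%:num l2%:num psi2 psi1 t) ->
    B (tproj (mkRaw psi x1 x2)) = tproj (mkRaw psi' x2 x1).

(* the action of omega : L' -> L, (D (x) E)(L) -> (D (x) E)(L'), as a relation
   q |-> q' ; (psi, x1, x2) |-> (psi omega, x1, x2) *)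
Definition tens_act (D E : GSpace) (L L' : {posnum R}) (omega : Gm L'%:num L%:num)
    (q : TensG D E L) (q' : TensG D E L') :=
  exists (l1 l2 : {posnum R}) (psi : Gm L%:num (l1%:num + l2%:num))
    (psi' : Gm L'%:num (l1%:num + l2%:num)) (x1 : gsp D l1) (x2 : gsp E l2),
    (forall t, sval psi' t = sval psi (sval omega t)) /\
    q = tproj (mkRaw psi x1 x2) /\ q' = tproj (mkRaw psi' x1 x2).

Definition natural_swap (D E : GSpace)
    (B : forall L : {posnum R}, TensG D E L -> TensG E D L) :=
  forall (L L' : {posnum R}) (omega : Gm L'%:num L%:num) (q : TensG D E L) (q' : TensG D E L'),
    tens_act omega q q' -> tens_act omega (B L q) (B L' q').

End Delta.

From HB Require Import structures.
From mathcomp Require Import all_boot all_order all_algebra.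
From mathcomp Require Import all_classical all_reals all_analysis.
From mathcomp Require Import ring lra.
From Stdlib Require Import Relations.Relation_Operators.
Set Implicit Arguments. Unset Strict Implicit. Unset Printing Implicit Defensive.
Import Order.TTheory GRing.Theory Num.Theory.
Import numFieldTopology.Exports.
Local Open Scope classical_set_scope.
Local Open Scope ring_scope.

(* A morphism psi : L -> l1 + l2 of G splits uniquely as psi1 (x) psi2 at the
   point a where psi a = l1, and psi2 (x) psi1 is then t |-> (psi (x) psi)(t + a) - l1
   on [0, L].  This swap of morphisms is an involution and commutes with the
   generating identifications, so it induces a self-inverse B.  B is continuous
   because the swap is continuous for the compact-open topology: the split point
   depends continuously on psi for the sup distance, compact-open neighbourhoods
   contain sup-balls, and by compactness a sup-ball around the swapped map stays in
   any compact-open neighbourhood of it.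
   For one-point G-spaces, "psi t0 = l1" is invariant under the identifications.
   The identity of [0, 2] is 1 (x) 1 and is its own swap; for the reparametrisation
   bend of [0, 2] with bend (1/2) = 1, naturality would force the swap of bend to
   hit 1 at 1/2, but it takes the value 1/3 there. *)

Section EpsilonDelta.
Variable R : realType.
Implicit Types (f g h : R -> R) (x y z c d e k : R).

Definition edcont f x := forall e, 0 < e ->
  exists2 d, 0 < d & forall y, `|y - x| < d -> `|f y - f x| < e.

Lemma subD2r x y z : x + z - (y + z) = x - y.
Proof. by rewrite (addrC y) addrKA. Qed.

Lemma ltr_dist_trans x y z e1 e2 :
  `|x - y| < e1 -> `|y - z| < e2 -> `|x - z| < e1 + e2.
Proof. by move=> xy yz; apply: le_lt_trans (ler_distD y x z) (ltrD xy yz). Qed.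

Lemma edcont_continuous f x : edcont f x -> {for x, continuous f}.
Proof.
move=> fx; apply/cvgrPdist_lt => e e_gt0.
have [d d_gt0 fxd] := fx e e_gt0.
apply/nbhs_ballP; exists d => //= y; rewrite /ball /= => yx.
by rewrite distrC fxd // distrC.
Qed.

Lemma edcont_within (A : set R) f :
  (forall x, A x -> edcont f x) -> {within A, continuous f}.
Proof.
move=> fA; apply: continuous_in_subspaceT => x; rewrite inE => Ax.
exact/edcont_continuous/fA.
Qed.

Lemma within_edcont (A : set R) f : {within A, continuous f} ->
  forall x, A x -> forall e, 0 < e ->
  exists2 d, 0 < d & forall y, A y -> `|y - x| < d -> `|f y - f x| < e.
Proof.
move=> /subspace_continuousP fA x Ax e e_gt0.
move: (fA x Ax) => /cvgrPdist_lt /(_ e e_gt0).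
rewrite near_withinE => /nbhs_ballP [d /= d_gt0 fxd].
exists d => // y Ay yx; rewrite distrC; apply: fxd => //.
by rewrite -ball_normE /= distrC.
Qed.

Lemma edcont_lipschitz f k x : 0 < k ->
  (forall y z, `|f y - f z| <= k * `|y - z|) -> edcont f x.
Proof.
move=> k_gt0 fk e e_gt0; exists (e / k); first exact: divr_gt0.
move=> y yx; apply: le_lt_trans (fk y x) _.
by rewrite mulrC -ltr_pdivlMr.
Qed.

Lemma edcont_comp f g x : edcont f x -> edcont g (f x) -> edcont (g \o f) x.
Proof.
move=> fx gfx e e_gt0; have [d d_gt0 gd] := gfx e e_gt0.
have [d' d'_gt0 fd'] := fx d d_gt0.
by exists d' => // y /fd' /gd.
Qed.

End EpsilonDelta.

Section Clamp.
Variable R : realType.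
Implicit Types (a p c d t x y : R) (f h : R -> R).

Lemma clampRE a t : 0 <= a ->
  clampR a t = if t <= 0 then 0 else if t <= a then t else a.
Proof.
move=> a_ge0; rewrite /clampR; case: ifP => t0.
  rewrite (_ : Num.max 0 t = 0); last exact/max_idPl.
  exact/min_idPr.
rewrite (_ : Num.max 0 t = t); last by apply/max_idPr; lra.
by case: ifP => ta; [apply/min_idPr | apply/min_idPl; lra].
Qed.

Lemma clampR_itv a t : 0 <= a -> 0 <= clampR a t <= a.
Proof. by move=> a_ge0; rewrite clampRE //; do 2?case: ifP => ?; lra. Qed.

Lemma clampR_id a t : 0 <= t <= a -> clampR a t = t.
Proof. by move=> /andP[t0 ta]; rewrite clampRE ?ta; [case: ifP => ? | lra]; lra. Qed.

Lemma clampR_le0 a t : 0 <= a -> t <= 0 -> clampR a t = 0.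
Proof. by move=> a_ge0 t0; rewrite clampRE ?t0. Qed.

Lemma clampR_ge a t : 0 <= a -> a <= t -> clampR a t = a.
Proof. by move=> a_ge0 at_; rewrite clampRE //; do 2?case: ifP => ?; lra. Qed.

Lemma clampR_idem a t : 0 <= a -> clampR a (clampR a t) = clampR a t.
Proof. by move=> a_ge0; apply/clampR_id/clampR_itv. Qed.

Lemma clampR_lip a x y : 0 <= a -> `|clampR a y - clampR a x| <= `|y - x|.
Proof.
move=> a_ge0; wlog xy : x y / x <= y.
  move=> H; case: (boolP (x <= y)) => [/H // | ]; rewrite -ltNge => /ltW/H h.
  by rewrite distrC (distrC y).
rewrite (ger0_norm (ltac:(lra) : 0 <= y - x)) ler_norml !clampRE //.
by do ?case: ifP => ?; lra.
Qed.

Lemma edcont_clampR a x : 0 <= a -> edcont (clampR a) x.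
Proof.
by move=> a_ge0; apply: (@edcont_lipschitz _ _ 1) => // y z; rewrite mul1r clampR_lip.
Qed.

Lemma edcont_clamp a f : 0 <= a -> {within [set t | 0 <= t <= a], continuous f} ->
  forall x, edcont (f \o clampR a) x.
Proof.
move=> a_ge0 fa x e e_gt0.
have [d d_gt0 fd] := within_edcont fa (clampR_itv x a_ge0) e_gt0.
exists d => // y yx; apply: fd; first exact: clampR_itv.
exact: le_lt_trans (clampR_lip _ _ a_ge0) yx.
Qed.

Lemma edcont_clamp_shift h p c d x : 0 <= p -> (forall y, edcont h y) ->
  edcont (fun u => h (clampR p u + c) - d) x.
Proof.
move=> p_ge0 hc e e_gt0; have [r r_gt0 hr] := hc (clampR p x + c) e e_gt0.
exists r => // y yx; rewrite opprB addrA subrK.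
apply: hr; rewrite subD2r.
exact: le_lt_trans (clampR_lip _ _ p_ge0) yx.
Qed.

End Clamp.

Section GmorTheory.
Variable R : realType.
Implicit Types (a b c s t u x : R) (f g : R -> R).

Lemma isGmor_intro a b f g :
  (forall t, f t = f (clampR a t)) ->
  (forall t, 0 <= t <= a -> 0 <= f t <= b) ->
  (forall s t, 0 <= s <= a -> 0 <= t <= a -> s <= t -> f s <= f t) ->
  (forall x, edcont f x) ->
  (forall u, 0 <= u <= b -> 0 <= g u <= a) ->
  (forall t, 0 <= t <= a -> g (f t) = t) ->
  (forall u, 0 <= u <= b -> f (g u) = u) ->
  (forall x, edcont g x) -> isGmor a b f.
Proof.
move=> fclamp fab fmono fcont gba gf fg gcont.
do 3 split=> //; split; first exact: edcont_within.
by exists g; do 3 split=> //; exact: edcont_within.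
Qed.

Section OneMorphism.
Variables (a b : R) (f : R -> R).
Hypotheses (a_gt0 : 0 < a) (fG : isGmor a b f).

Lemma Gmor_clamp t : f t = f (clampR a t).
Proof. by case: fG. Qed.

Lemma Gmor_itv t : 0 <= t <= a -> 0 <= f t <= b.
Proof. by case: fG => _ [fab _]; apply: fab. Qed.

Lemma Gmor_range t : 0 <= f t <= b.
Proof. by rewrite Gmor_clamp; apply/Gmor_itv/clampR_itv/ltW. Qed.

Lemma Gmor_mono s t : 0 <= s <= a -> 0 <= t <= a -> s <= t -> f s <= f t.
Proof. by case: fG => _ [_ [fmono _]]; apply: fmono. Qed.

Lemma Gmor_edcont x : edcont f x.
Proof.
case: fG => fclamp [_ [_ [fcont _]]].
have -> : f = f \o clampR a by apply: funext => t /=; rewrite -fclamp.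
exact: edcont_clamp (ltW a_gt0) fcont x.
Qed.

Let preinv : exists g, [/\ forall u, 0 <= g u <= a,
  forall t, 0 <= t <= a -> g (f t) = t,
  forall u, 0 <= u <= b -> f (g u) = u & forall x, edcont g x].
Proof.
case: fG => _ [fab [_ [_ [g [gba [gf [fg gcont]]]]]]].
have b_ge0 : 0 <= b.
  by have /andP[] := fab 0 (ltac:(by rewrite lexx ltW)); lra.
exists (g \o clampR b); split=> /=.
- by move=> u; apply/gba/clampR_itv.
- by move=> t ta; rewrite clampR_id ?gf ?fab.
- by move=> u ub; rewrite clampR_id ?fg.
- exact: edcont_clamp.
Qed.

Lemma Gmor_inj s t : 0 <= s <= a -> 0 <= t <= a -> f s = f t -> s = t.
Proof. by move=> sa ta fst; have [g [_ gf _ _]] := preinv; rewrite -(gf s) // fst gf. Qed.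

Lemma Gmor_lt s t : 0 <= s <= a -> 0 <= t <= a -> s < t -> f s < f t.
Proof.
move=> sa ta st; rewrite lt_neqAle Gmor_mono ?(ltW st) // andbT.
by apply/eqP => /(Gmor_inj sa ta); lra.
Qed.

Lemma Gmor0 : f 0 = 0.
Proof.
have [g [gba _ fg _]] := preinv.
have b_ge0 : 0 <= b by have /andP[] := Gmor_range 0; lra.
have a0 : (0 : R) <= 0 <= a by rewrite lexx ltW.
have := Gmor_mono a0 (gba 0); rewrite fg ?lexx //.
by have := gba 0; have := Gmor_range 0; lra.
Qed.

Lemma Gmor_end : f a = b.
Proof.
have [g [gba _ fg _]] := preinv.
have b_ge0 : 0 <= b by have /andP[] := Gmor_range 0; lra.
have aa : 0 <= a <= a by rewrite lexx ltW.
have := Gmor_mono (gba b) aa; rewrite fg ?lexx ?andbT //.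
by have := gba b; have := Gmor_range a; lra.
Qed.

Lemma Gmor_cod_gt0 : 0 < b.
Proof.
by rewrite -Gmor_end -{1}Gmor0; apply: Gmor_lt; rewrite ?lexx ?ltW.
Qed.

Lemma Gmor_inv : exists g, [/\ isGmor b a g,
  forall t, 0 <= t <= a -> g (f t) = t & forall u, 0 <= u <= b -> f (g u) = u].
Proof.
have [g [gba gf fg gcont]] := preinv.
have b_ge0 := ltW Gmor_cod_gt0.
exists (g \o clampR b); split=> /=; last 2 first.
- by move=> t ta; rewrite clampR_id ?gf ?Gmor_itv.
- by move=> u ub; rewrite clampR_id ?fg.
apply: (isGmor_intro (g := f)) => /=.
- by move=> u; rewrite clampR_idem.
- by move=> u ub; rewrite clampR_id.
- move=> u v ub vb uv; rewrite !clampR_id // leNgt; apply/negP => /Gmor_lt.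
  by rewrite !fg // => /(_ (gba v) (gba u)); lra.
- by move=> x; apply: edcont_comp; [exact: edcont_clampR | exact: gcont].
- exact: Gmor_itv.
- by move=> u ub; rewrite clampR_id ?fg.
- by move=> t ta; rewrite clampR_id ?gf ?Gmor_itv.
- exact: Gmor_edcont.
Qed.

End OneMorphism.

Lemma isGmor_comp a b c f g : 0 < a -> 0 < b ->
  isGmor a b f -> isGmor b c g -> isGmor a c (g \o f).
Proof.
move=> a_gt0 b_gt0 fG gG.
have [F [FG Ff fF]] := Gmor_inv a_gt0 fG.
have [G [GG Gg gG']] := Gmor_inv b_gt0 gG.
have c_gt0 := Gmor_cod_gt0 b_gt0 gG.
have fab := Gmor_itv fG; have gbc := Gmor_itv gG.
have Fba := Gmor_itv FG; have Gcb := Gmor_itv GG.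
apply: (isGmor_intro (g := F \o G)) => /=.
- by move=> t; rewrite -(Gmor_clamp fG).
- by move=> t /fab /gbc.
- move=> s t sa ta st; apply: (Gmor_mono gG); rewrite ?fab //.
  exact: (Gmor_mono fG).
- move=> x; apply: edcont_comp; first exact: (Gmor_edcont a_gt0 fG x).
  exact: (Gmor_edcont b_gt0 gG (f x)).
- by move=> u /Gcb /Fba.
- by move=> t ta; rewrite Gg ?Ff ?fab.
- by move=> u uc; rewrite fF ?gG' ?Gcb.
- move=> x; apply: edcont_comp; first exact: (Gmor_edcont c_gt0 GG x).
  exact: (Gmor_edcont b_gt0 FG (G x)).
Qed.

Definition linmor a b t := b / a * clampR a t.

Lemma linmor_itv a b t : 0 < a -> 0 < b -> 0 <= t <= a -> 0 <= linmor a b t <= b.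
Proof.
move=> a_gt0 b_gt0 ta; rewrite /linmor clampR_id //.
have ba_ge0 : 0 <= b / a by rewrite ltW ?divr_gt0.
have /andP[t0 t1] := ta; rewrite mulr_ge0 //=.
by rewrite -[leRHS](divfK (lt0r_neq0 a_gt0)) ler_wpM2l.
Qed.

Lemma linmorK a b t : 0 < a -> 0 < b -> 0 <= t <= a -> linmor b a (linmor a b t) = t.
Proof.
move=> a_gt0 b_gt0 ta; rewrite /linmor [X in _ * X]clampR_id ?linmor_itv //.
rewrite clampR_id //; field; apply/andP; split; exact: lt0r_neq0.
Qed.

Lemma linmor_isGmor a b : 0 < a -> 0 < b -> isGmor a b (linmor a b).
Proof.
have linmor_edcont c d x : 0 < c -> 0 < d -> edcont (linmor c d) x.
  move=> c_gt0 d_gt0; apply: (@edcont_lipschitz _ _ (d / c)); first exact: divr_gt0.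
  move=> y z; rewrite /linmor -mulrBr normrM gtr0_norm ?divr_gt0 //.
  by rewrite ler_wpM2l ?clampR_lip // ltW ?divr_gt0.
move=> a_gt0 b_gt0; apply: (isGmor_intro (g := linmor b a)).
- by move=> t; rewrite /linmor clampR_idem // ltW.
- by move=> t; apply: linmor_itv.
- move=> s t sa ta st; rewrite /linmor !clampR_id //.
  by rewrite ler_wpM2l // ltW ?divr_gt0.
- by move=> x; apply: linmor_edcont.
- by move=> u; apply: linmor_itv.
- by move=> t; apply: linmorK.
- by move=> u; apply: linmorK.
- by move=> x; apply: linmor_edcont.
Qed.

End GmorTheory.

Section Tensor.
Variable R : realType.
Implicit Types (m l k s t u x : R) (f g : R -> R).

Lemma tens_edcont m l f g x : (forall y, edcont f y) -> (forall y, edcont g y) ->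
  f m = g 0 + l -> edcont (tens m l f g) x.
Proof.
move=> fc gc fmg e e_gt0; rewrite /tens.
case: (ltgtP x m) => xm.
- have [d d_gt0 fd] := fc x e e_gt0.
  exists (Num.min d (m - x)); first by rewrite lt_min d_gt0 subr_gt0.
  move=> y; rewrite lt_min => /andP[yd]; rewrite ltr_distlC => /andP[ym _].
  by rewrite !ifT; [exact: fd | lra].
- have [d d_gt0 gd] := gc (x - m) e e_gt0.
  exists (Num.min d (x - m)); first by rewrite lt_min d_gt0 subr_gt0.
  move=> y; rewrite lt_min => /andP[yd]; rewrite ltr_distlC => /andP[_ ym].
  rewrite !ifF; try by apply/negbTE; rewrite -ltNge; lra.
  rewrite subD2r; apply: gd.
  by rewrite opprB addrA subrK.
- subst x; have [d1 d1_gt0 fd] := fc m e e_gt0.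
  have [d2 d2_gt0 gd] := gc 0 e e_gt0.
  exists (Num.min d1 d2); first by rewrite lt_min d1_gt0.
  move=> y; rewrite lt_min => /andP[yd1 yd2]; case: ifP => ym; first exact: fd.
  rewrite fmg subD2r; apply: gd.
  by rewrite subr0.
Qed.

Lemma tensE_le m l f g t : t <= m -> tens m l f g t = f t.
Proof. by rewrite /tens => ->. Qed.

Lemma tensE_gt m l f g t : m < t -> tens m l f g t = g (t - m) + l.
Proof. by rewrite /tens ltNge => /negbTE ->. Qed.

Lemma tensE_ge m l f g t : f m = g 0 + l -> m <= t -> tens m l f g t = g (t - m) + l.
Proof.
move=> fmg; rewrite le_eqVlt => /orP[/eqP <- | /tensE_gt //].
by rewrite tensE_le // subrr.
Qed.

Section Morphisms.
Variables (m1 m2 l1 l2 : R) (f g : R -> R).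
Hypotheses (m1_gt0 : 0 < m1) (m2_gt0 : 0 < m2).
Hypotheses (fG : isGmor m1 l1 f) (gG : isGmor m2 l2 g).

Lemma tens_clamp t : tens m1 l1 f g t = tens m1 l1 f g (clampR (m1 + m2) t).
Proof.
have m1p := m1_gt0; have m2p := m2_gt0.
have m12_ge0 : 0 <= m1 + m2 by lra.
case: (lerP t 0) => t0.
  rewrite clampR_le0 // !tensE_le ?(Gmor_clamp fG t) ?clampR_le0 //; lra.
case: (lerP t (m1 + m2)) => tm; first by rewrite clampR_id // (ltW t0) tm.
rewrite clampR_ge ?tensE_gt ?(Gmor_clamp gG (t - m1)) ?clampR_ge; try lra.
by rewrite addrAC subrr add0r.
Qed.

Lemma tens_itv t : 0 <= t <= m1 + m2 -> 0 <= tens m1 l1 f g t <= l1 + l2.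
Proof.
have l1p := Gmor_cod_gt0 m1_gt0 fG; have l2p := Gmor_cod_gt0 m2_gt0 gG.
move=> /andP[t0 tm]; case: (lerP t m1) => t1.
  by rewrite tensE_le //; have := Gmor_itv fG (t := t); lra.
by rewrite tensE_gt //; have := Gmor_itv gG (t := t - m1); lra.
Qed.

Lemma tens_mono s t : 0 <= s <= m1 + m2 -> 0 <= t <= m1 + m2 -> s <= t ->
  tens m1 l1 f g s <= tens m1 l1 f g t.
Proof.
move=> /andP[s0 sm] /andP[t0 tm] st.
case: (lerP t m1) => t1.
  by rewrite !tensE_le; [apply: (Gmor_mono fG); lra | lra | lra].
rewrite [leRHS]tensE_gt //; case: (lerP s m1) => s1.
  have := Gmor_itv fG (t := s); have := Gmor_itv gG (t := t - m1).
  by rewrite tensE_le //; lra.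
by rewrite tensE_gt // lerD2r; apply: (Gmor_mono gG); lra.
Qed.

Lemma tens_junctionP s : 0 <= s <= m1 + m2 -> tens m1 l1 f g s = l1 <-> s = m1.
Proof.
have m1p := m1_gt0; move=> /andP[s0 sm]; split=> [|->]; last first.
  by rewrite tensE_le // (Gmor_end m1_gt0 fG).
case: (lerP s m1) => s1.
  rewrite tensE_le // -(Gmor_end m1_gt0 fG) => fs.
  by apply: (Gmor_inj m1_gt0 fG) => //; lra.
rewrite tensE_gt // => gs.
by have := Gmor_lt m2_gt0 gG (s := 0) (t := s - m1); rewrite (Gmor0 m2_gt0 gG); lra.
Qed.

End Morphisms.

Lemma tens_comp m1 m2 k1 k2 l1 l2 p1 p2 phi1 phi2 :
  0 < m1 -> 0 < m2 -> 0 < k1 -> 0 < k2 ->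
  isGmor m1 k1 p1 -> isGmor m2 k2 p2 -> isGmor k1 l1 phi1 -> isGmor k2 l2 phi2 ->
  forall t, tens k1 l1 phi1 phi2 (tens m1 k1 p1 p2 t) =
            tens m1 l1 (phi1 \o p1) (phi2 \o p2) t.
Proof.
move=> m1_gt0 m2_gt0 k1_gt0 k2_gt0 p1G p2G phi1G phi2G t.
case: (lerP t m1) => tm.
  by rewrite !tensE_le //; have /andP[] := Gmor_range m1_gt0 p1G t.
rewrite [RHS]tensE_gt // [tens m1 k1 p1 p2 t]tensE_gt //=.
have := Gmor_range m2_gt0 p2G (t - m1).
case: (lerP (p2 (t - m1) + k1) k1) => pk p2_itv; last by rewrite tensE_gt // addrK.
have -> : p2 (t - m1) = 0 by lra.
by rewrite add0r tensE_le // (Gmor_end k1_gt0 phi1G) (Gmor0 k2_gt0 phi2G) add0r.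
Qed.

Lemma tens_cancel m1 m2 l1 l2 f g F G : 0 < m1 -> 0 < m2 -> 0 < l1 -> 0 < l2 ->
  isGmor m1 l1 f -> isGmor m2 l2 g -> isGmor l1 m1 F -> isGmor l2 m2 G ->
  (forall t, 0 <= t <= m1 -> F (f t) = t) -> (forall t, 0 <= t <= m2 -> G (g t) = t) ->
  forall t, 0 <= t <= m1 + m2 -> tens l1 m1 F G (tens m1 l1 f g t) = t.
Proof.
move=> m1_gt0 m2_gt0 l1_gt0 l2_gt0 fG gG FG GG Ff Gg t /andP[t0 tm].
rewrite (tens_comp m1_gt0 m2_gt0 l1_gt0 l2_gt0 fG gG FG GG).
case: (lerP t m1) => t1; first by rewrite tensE_le //= Ff //; lra.
by rewrite tensE_gt //= Gg ?subrK //; lra.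
Qed.

Lemma tens_isGmor m1 m2 l1 l2 f g : 0 < m1 -> 0 < m2 ->
  isGmor m1 l1 f -> isGmor m2 l2 g -> isGmor (m1 + m2) (l1 + l2) (tens m1 l1 f g).
Proof.
move=> m1_gt0 m2_gt0 fG gG.
have l1_gt0 := Gmor_cod_gt0 m1_gt0 fG; have l2_gt0 := Gmor_cod_gt0 m2_gt0 gG.
have [F [FG Ff fF]] := Gmor_inv m1_gt0 fG; have [G [GG Gg gG']] := Gmor_inv m2_gt0 gG.
apply: (isGmor_intro (g := tens l1 m1 F G)).
- exact: (tens_clamp m1_gt0 m2_gt0 fG gG).
- exact: (tens_itv m1_gt0 m2_gt0 fG gG).
- exact: (tens_mono fG gG).
- move=> x; apply: tens_edcont => [y|y|].
  + exact: (Gmor_edcont m1_gt0 fG y).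
  + exact: (Gmor_edcont m2_gt0 gG y).
  by rewrite (Gmor_end m1_gt0 fG) (Gmor0 m2_gt0 gG) add0r.
- exact: (tens_itv l1_gt0 l2_gt0 FG GG).
- exact: (tens_cancel m1_gt0 m2_gt0 l1_gt0 l2_gt0 fG gG FG GG).
- exact: (tens_cancel l1_gt0 l2_gt0 m1_gt0 m2_gt0 FG GG fG gG).
- move=> x; apply: tens_edcont => [y|y|].
  + exact: (Gmor_edcont l1_gt0 FG y).
  + exact: (Gmor_edcont l2_gt0 GG y).
  by rewrite (Gmor_end l1_gt0 FG) (Gmor0 l2_gt0 GG) add0r.
Qed.

End Tensor.

Section Swap.
Variable R : realType.
Implicit Types (L l m a b s t u x : R) (psi f g : R -> R).

Definition restr psi a b t := psi (clampR (b - a) t + a) - psi a.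

Lemma restr_isGmor L l psi a b : 0 < L -> isGmor L l psi ->
  0 <= a -> a < b -> b <= L -> isGmor (b - a) (psi b - psi a) (restr psi a b).
Proof.
move=> L_gt0 psiG a_ge0 ab bL.
have [G [GG Gpsi psiG']] := Gmor_inv L_gt0 psiG.
have l_gt0 := Gmor_cod_gt0 L_gt0 psiG.
have aL : 0 <= a <= L by lra.
have bL' : 0 <= b <= L by lra.
have shiftL t : 0 <= t <= b - a -> 0 <= t + a <= L by lra.
have psi_ab t : 0 <= t <= b - a -> psi a <= psi (t + a) <= psi b.
  by move=> tba; rewrite !(Gmor_mono psiG) ?shiftL //; lra.
have psia := Gmor_itv psiG aL; have psib := Gmor_itv psiG bL'.
have shiftl u : 0 <= u <= psi b - psi a -> 0 <= u + psi a <= l by lra.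
have G_ab u : 0 <= u <= psi b - psi a -> a <= G (u + psi a) <= b.
  move=> uba.
  by rewrite -{1}(Gpsi a aL) -(Gpsi b bL') !(Gmor_mono GG) ?shiftl //; lra.
have psi_ab_ge0 : 0 <= psi b - psi a by have := psi_ab 0 (ltac:(lra)); lra.
apply: (isGmor_intro (g := fun u => G (clampR (psi b - psi a) u + psi a) - a)).
- by move=> t; rewrite /restr clampR_idem // subr_ge0 ltW.
- by move=> t tba; rewrite /restr clampR_id //; have := psi_ab t tba; lra.
- move=> s t sba tba st; rewrite /restr !clampR_id // lerD2r.
  by rewrite (Gmor_mono psiG) ?shiftL // lerD2r.
- move=> x; apply: edcont_clamp_shift => [|y]; first lra.
  exact: (Gmor_edcont L_gt0 psiG y).
- by move=> u uba; rewrite clampR_id //; have := G_ab u uba; lra.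
- move=> t tba; have /andP[? ?] := psi_ab t tba.
  by rewrite /restr clampR_id // clampR_id ?subrK ?Gpsi ?shiftL ?addrK //; lra.
- move=> u uba; have /andP[? ?] := G_ab u uba.
  by rewrite /restr clampR_id // clampR_id ?subrK ?psiG' ?shiftl ?addrK //; lra.
- move=> x; apply: edcont_clamp_shift => [|y]; first lra.
  exact: (Gmor_edcont l_gt0 GG y).
Qed.

Definition splitpt L l1 psi := xget 0 [set a | 0 <= a <= L /\ psi a = l1].

Lemma splitpt_spec L l1 l2 psi : 0 < L -> 0 < l1 -> 0 < l2 -> isGmor L (l1 + l2) psi ->
  [/\ 0 < splitpt L l1 psi < L, psi (splitpt L l1 psi) = l1 &
      forall m, 0 <= m <= L -> psi m = l1 -> m = splitpt L l1 psi].
Proof.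
move=> L_gt0 l1_gt0 l2_gt0 psiG.
have [G [GG _ psiG']] := Gmor_inv L_gt0 psiG.
have l1_itv : 0 <= l1 <= l1 + l2 by lra.
have [/andP[a0 aL] psia] : 0 <= splitpt L l1 psi <= L /\ psi (splitpt L l1 psi) = l1.
  apply: (xgetPex 0 (P := [set a | 0 <= a <= L /\ psi a = l1])).
  by exists (G l1); split; [apply: (Gmor_itv GG) | apply: psiG'].
have psi0 := Gmor0 L_gt0 psiG; have psiL := Gmor_end L_gt0 psiG.
split=> //; last first.
  move=> m mL psim; apply: (Gmor_inj L_gt0 psiG) => //; first by rewrite a0.
  by rewrite psim.
rewrite !lt_neqAle a0 aL !andbT; apply/andP; split; apply/eqP => ea.
- by move: psia; rewrite -ea psi0; lra.
- by move: psia; rewrite ea psiL; lra.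
Qed.

Definition swapmor L l1 l2 psi t :=
  tens L (l1 + l2) psi psi (clampR L t + splitpt L l1 psi) - l1.

Lemma swapmor_tens L l1 l2 m1 m2 psi p1 p2 : 0 < m1 -> 0 < m2 -> m1 + m2 = L ->
  isGmor m1 l1 p1 -> isGmor m2 l2 p2 -> (forall t, psi t = tens m1 l1 p1 p2 t) ->
  forall t, swapmor L l1 l2 psi t = tens m2 l2 p2 p1 t.
Proof.
move=> m1_gt0 m2_gt0 <- p1G p2G psiE.
have l1_gt0 := Gmor_cod_gt0 m1_gt0 p1G; have l2_gt0 := Gmor_cod_gt0 m2_gt0 p2G.
have psiG : isGmor (m1 + m2) (l1 + l2) psi.
  by rewrite (funext psiE); apply: tens_isGmor.
have [_ _ uniq] := splitpt_spec (addr_gt0 m1_gt0 m2_gt0) l1_gt0 l2_gt0 psiG.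
have split_m1 : splitpt (m1 + m2) l1 psi = m1.
  by apply/esym/uniq; [lra | rewrite psiE tensE_le // (Gmor_end m1_gt0 p1G)].
move=> t; rewrite /swapmor split_m1 [RHS](tens_clamp m2_gt0 m1_gt0 p2G p1G) (addrC m2 m1).
have /andP[s0 sm] := clampR_itv t (ltW (addr_gt0 m1_gt0 m2_gt0)).
set s := clampR (m1 + m2) t in s0 sm *.
case: (lerP s m2) => sm2.
  rewrite [tens m2 _ _ _ _]tensE_le // tensE_le; last lra.
  rewrite psiE tensE_ge ?addrK //; last lra.
  by rewrite (Gmor_end m1_gt0 p1G) (Gmor0 m2_gt0 p2G) add0r.
rewrite [tens m2 _ _ _ _]tensE_gt // tensE_gt; last lra.
rewrite psiE tensE_le; last lra.
by rewrite (_ : s + m1 - (m1 + m2) = s - m2); ring.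
Qed.

Section Split.
Variables (L l1 l2 : R) (psi : R -> R).
Hypotheses (L_gt0 : 0 < L) (l1_gt0 : 0 < l1) (l2_gt0 : 0 < l2).
Hypothesis psiG : isGmor L (l1 + l2) psi.

Let a := splitpt L l1 psi.
Let a_spec : 0 < a < L /\ psi a = l1.
Proof. by have [] := splitpt_spec L_gt0 l1_gt0 l2_gt0 psiG. Qed.

Lemma tens_split t : psi t = tens a l1 (restr psi 0 a) (restr psi a L) t.
Proof.
have [/andP[a0 aL] psia] := a_spec.
rewrite (Gmor_clamp psiG t); case: (lerP t a) => ta.
  rewrite tensE_le // /restr (Gmor0 L_gt0 psiG) subr0 addr0 subr0; congr psi.
  by rewrite !clampRE; try lra; do !case: ifP => ?; lra.
rewrite tensE_gt // /restr psia subrK; congr psi.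
by rewrite !clampRE; try lra; do !case: ifP => ?; lra.
Qed.

Lemma restr_split_isGmorl : isGmor a l1 (restr psi 0 a).
Proof.
have [/andP[a0 aL] psia] := a_spec.
have := restr_isGmor L_gt0 psiG (lexx 0) a0 (ltW aL).
by rewrite subr0 psia (Gmor0 L_gt0 psiG) subr0.
Qed.

Lemma restr_split_isGmorr : isGmor (L - a) l2 (restr psi a L).
Proof.
have [/andP[a0 aL] psia] := a_spec.
have := restr_isGmor L_gt0 psiG (ltW a0) aL (lexx L).
by rewrite psia (Gmor_end L_gt0 psiG) addrAC subrr add0r.
Qed.

Lemma swapmor_split t :
  swapmor L l1 l2 psi t = tens (L - a) l2 (restr psi a L) (restr psi 0 a) t.
Proof.
have [/andP[a0 aL] _] := a_spec.
apply: (swapmor_tens a0 _ _ restr_split_isGmorl restr_split_isGmorr tens_split).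
- by rewrite subr_gt0.
- by rewrite addrC subrK.
Qed.

Lemma swapmor_isGmor : isGmor L (l2 + l1) (swapmor L l1 l2 psi).
Proof.
have [/andP[a0 aL] _] := a_spec.
rewrite (funext swapmor_split) -[X in isGmor X](subrK a L).
by apply: tens_isGmor restr_split_isGmorr restr_split_isGmorl; rewrite ?subr_gt0.
Qed.

Lemma swapmorK t : swapmor L l2 l1 (swapmor L l1 l2 psi) t = psi t.
Proof.
have [/andP[a0 aL] _] := a_spec.
rewrite [RHS]tens_split.
apply: (swapmor_tens _ a0 _ restr_split_isGmorr restr_split_isGmorl swapmor_split).
- by rewrite subr_gt0.
- by rewrite subrK.
Qed.

End Split.

Lemma swapmor_comp L m1 m2 l1 l2 psi psi' phi1 phi2 : 0 < L -> 0 < m1 -> 0 < m2 ->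
  isGmor L (m1 + m2) psi -> isGmor m1 l1 phi1 -> isGmor m2 l2 phi2 ->
  (forall t, psi' t = tens m1 l1 phi1 phi2 (psi t)) ->
  forall t, swapmor L l1 l2 psi' t = tens m2 l2 phi2 phi1 (swapmor L m1 m2 psi t).
Proof.
move=> L_gt0 m1_gt0 m2_gt0 psiG phi1G phi2G psi'E.
have [/andP[a0 aL] _ _] := splitpt_spec L_gt0 m1_gt0 m2_gt0 psiG.
set a := splitpt L m1 psi in a0 aL *.
have La : 0 < L - a by rewrite subr_gt0.
have r1G := restr_split_isGmorl L_gt0 m1_gt0 m2_gt0 psiG.
have r2G := restr_split_isGmorr L_gt0 m1_gt0 m2_gt0 psiG.
have psi'_tens t : psi' t = tens a l1 (phi1 \o restr psi 0 a) (phi2 \o restr psi a L) t.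
  rewrite psi'E (tens_split L_gt0 m1_gt0 m2_gt0 psiG).
  exact: (tens_comp a0 La m1_gt0 m2_gt0 r1G r2G phi1G phi2G).
move=> t; rewrite (swapmor_split L_gt0 m1_gt0 m2_gt0 psiG).
rewrite (tens_comp La a0 m2_gt0 m1_gt0 r2G r1G phi2G phi1G).
apply: (swapmor_tens a0 La _ _ _ psi'_tens); first by rewrite addrC subrK.
- exact: isGmor_comp r1G phi1G.
- exact: isGmor_comp r2G phi2G.
Qed.

End Swap.

Local Notation "'crst' r" := (clos_refl_sym_trans _ r) (at level 10, r at level 9).

Section Quotient.
Variables (T : Type) (r : T -> T -> Prop).

Lemma qproj_eq x y : crst r x y -> qproj (crst r) x = qproj (crst r) y.
Proof.
move=> xy; apply: eq_sig_hprop => [? ? ?|/=]; first exact: Prop_irrelevance.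
apply: funext => z; apply: propext; split=> [xz | yz].
- exact: rst_trans (rst_sym _ _ _ _ xy) xz.
- exact: rst_trans xy yz.
Qed.

Lemma qproj_inj x y : qproj (crst r) x = qproj (crst r) y -> crst r x y.
Proof. by move=> /(congr1 sval) /= ->; apply: rst_refl. Qed.

Lemma qprojP (q : quot (crst r)) : exists x, q = qproj (crst r) x.
Proof.
case: q => S [x Sx]; exists x.
by apply: eq_sig_hprop => [? ? ?|//]; exact: Prop_irrelevance.
Qed.

Lemma crst_invariant (P : T -> Prop) : (forall x y, r x y -> P x <-> P y) ->
  forall x y, crst r x y -> P x <-> P y.
Proof. by move=> rP x y; elim=> {x y} [x y /rP | x | x y _ | x y z _ + _] //; tauto. Qed.

End Quotient.

Section QuotientMap.
Variables (T U : Type) (r : T -> T -> Prop) (s : U -> U -> Prop) (f : T -> U).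
Hypothesis f_rel : forall x y, r x y -> s (f x) (f y).

Lemma crst_map x y : crst r x y -> crst s (f x) (f y).
Proof.
elim=> {x y} [x y /f_rel | x | x y _ | x y z _ + _].
- exact: rst_step.
- exact: rst_refl.
- exact: rst_sym.
- exact: rst_trans.
Qed.

Definition quot_map (q : quot (crst r)) : quot (crst s) :=
  qproj (crst s) (f (projT1 (cid (qprojP q)))).

Lemma quot_map_qproj x : quot_map (qproj (crst r) x) = qproj (crst s) (f x).
Proof.
rewrite /quot_map; case: cid => y /= e; have xy := qproj_inj e.
by apply: qproj_eq; apply: crst_map; apply: rst_sym.
Qed.

End QuotientMap.

Section TensorSwap.
Variable R : realType.

Definition swapG (L l1 l2 : {posnum R}) (psi : Gm L%:num (l1%:num + l2%:num)) :
    Gm L%:num (l2%:num + l1%:num) :=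
  exist _ (swapmor L%:num l1%:num l2%:num (sval psi))
    (swapmor_isGmor (gt0 L) (gt0 l1) (gt0 l2) (svalP psi)).

Lemma swapGK (L l1 l2 : {posnum R}) (psi : Gm L%:num (l1%:num + l2%:num)) :
  swapG (swapG psi) = psi.
Proof.
apply: eq_sig_hprop => [? ? ?|/=]; first exact: Prop_irrelevance.
by apply: funext => t; apply: swapmorK; try exact: gt0; exact: svalP.
Qed.

Implicit Types (D E : GSpace R) (L : {posnum R}).

Definition swap_raw D E L (r : Raw D E L) : Raw E D L :=
  let: existT l (psi, x1, x2) := r in mkRaw (swapG psi) x2 x1.

Lemma swap_rawK D E L (r : Raw D E L) : swap_raw (swap_raw r) = r.
Proof. by case: r => [[l1 l2] [[psi x1] x2]]; rewrite /= /mkRaw swapGK. Qed.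

Lemma swap_raw_cstep D E L (r r' : Raw D E L) :
  cstep r r' -> cstep (swap_raw r) (swap_raw r').
Proof.
case=> m1 m2 l1 l2 phi1 phi2 psi psi' x1 x2 psi'E /=.
apply: CStep => t /=; apply: swapmor_comp => //; try exact: gt0; exact: svalP.
Qed.

Definition tens_swap D E L : TensG D E L -> TensG E D L :=
  @quot_map _ _ (@cstep R D E L) (@cstep R E D L) (@swap_raw D E L).

Lemma tens_swap_tproj D E L (r : Raw D E L) : tens_swap (tproj r) = tproj (swap_raw r).
Proof. exact/quot_map_qproj/swap_raw_cstep. Qed.

Lemma tens_swapK D E L (q : TensG D E L) : tens_swap (tens_swap q) = q.
Proof.
have [r ->] : exists r, q = tproj r := qprojP q.
by rewrite !tens_swap_tproj swap_rawK.
Qed.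

Lemma tens_swap_induced D E L : induced_by_swap (@tens_swap D E L).
Proof.
move=> l1 l2 m1 m2 psi x1 x2 psi1 psi2 psi' m12 psi1G psi2G psiE psi'E.
rewrite tens_swap_tproj; congr (tproj (mkRaw _ x2 x1)).
apply: eq_sig_hprop => [? ? ?|/=]; first exact: Prop_irrelevance.
apply: funext => t; rewrite psi'E.
by apply: (swapmor_tens (gt0 m1) (gt0 m2) m12 psi1G psi2G psiE).
Qed.

End TensorSwap.

Section SetSystems.
Variable R : realType.

Lemma deltaify_cont (A B : Type) (oA : set (set A)) (oB : set (set B)) (f : A -> B) :
  cont oA oB f -> cont (deltaify R oA) (deltaify R oB) f.
Proof.
move=> fc U dU n sigma sigmac; apply: (dU n (f \o sigma)) => W oW.
exact: sigmac (fc _ oW).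
Qed.

Lemma sub_deltaify (X : Type) (tau : set (set X)) : tau `<=` deltaify R tau.
Proof. by move=> U tU n sigma; apply. Qed.

Lemma gen_top_subbasis (T : Type) (S : set (set T)) : S `<=` gen_top S.
Proof.
by move=> U SU x Ux; exists 1%N, (fun=> U); do 2!split=> //; move=> y /(_ ord0).
Qed.

Lemma gen_top_fin (T : Type) (S : set (set T)) (A : set T) :
  (forall x, A x -> exists (I : finType) (F : I -> set T),
     [/\ forall i, S (F i), forall i, F i x & forall y, (forall i, F i y) -> A y]) ->
  gen_top S A.
Proof.
move=> finA x Ax; have [I [F [SF Fx FA]]] := finA x Ax.
exists #|I|, (F \o enum_val); split=> [i|]; first exact: SF.
split=> [i|y Fy]; first exact: Fx.
by apply: FA => i; have := Fy (enum_rank i); rewrite /= enum_rankK.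
Qed.

Lemma cont_gen_top (A B : Type) (SA : set (set A)) (SB : set (set B)) (f : A -> B) :
  (forall S, SB S -> gen_top SA (f @^-1` S)) -> cont (gen_top SA) (gen_top SB) f.
Proof.
move=> fS U oU; apply: gen_top_fin => x /= Ufx.
have [n [F [SF [Ffx FU]]]] := oU (f x) Ufx.
have cover i : {k : nat & {G : 'I_k -> set A |
    [/\ forall j, SA (G j), forall j, G j x & forall y, (forall j, G j y) -> F i (f y)]}}.
  have [k /cid [G [SG [Gx GF]]]] := cid (fS _ (SF i) x (Ffx i)).
  by exists k, G; split.
exists {i : 'I_n & 'I_(projT1 (cover i))},
  (fun p => sval (projT2 (cover (projT1 p))) (projT2 p)).
split.
- by case=> i j /=; case: (svalP (projT2 (cover i))).
- by case=> i j /=; case: (svalP (projT2 (cover i))).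
- move=> y Gy; apply: FU => i; case: (svalP (projT2 (cover i))) => _ _; apply.
  by move=> j; apply: (Gy (existT _ i j)).
Qed.

Lemma cont_prod3_swap (A1 A2 B C : Type) (oA1 : set (set A1)) (oA2 : set (set A2))
    (oB : set (set B)) (oC : set (set C)) (f : A1 -> A2) :
  cont oA1 oA2 f ->
  cont (prod3_top R oA1 oB oC) (prod3_top R oA2 oC oB) (fun p => (f p.1.1, p.2, p.1.2)).
Proof.
move=> fc; apply/deltaify_cont/cont_gen_top => S.
case=> [[U [oU ->]] | [[U [oU ->]] | [U [oU ->]]]]; apply: gen_top_subbasis.
- by left; exists (f @^-1` U); split=> //; exact: fc.
- by right; right; exists U.
- by right; left; exists U.
Qed.

End SetSystems.

Section Compact.
Variable R : realType.
Implicit Types (K V : set R) (h : R -> R).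

Lemma compact_uniform_radius K (P : R -> R -> Prop) : compact K ->
  (forall x, K x -> exists2 r, 0 < r &
     forall x' e, `|x' - x| < r -> 0 < e < r -> P e x') ->
  exists2 r, 0 < r & forall x, K x -> P r x.
Proof.
move=> /compact_near_coveringP cK locP.
have : \forall i \near (0 : R), K `<=` (fun x => 0 < `|i| -> P `|i| x).
  apply: (cK R (nbhs (0 : R)) (fun i x => 0 < `|i| -> P `|i| x) _) => x Kx.
  have [r r_gt0 Pr] := locP x Kx.
  exists (ball x r, ball 0 r); first by split; apply: nbhsx_ballx.
  case=> x' i [/= xx' i0] ipos; apply: Pr; first by rewrite distrC.
  by move: i0; rewrite /ball /= sub0r normrN => ->; rewrite ipos.
move=> /nbhs_ballP [r /= r_gt0 Kr]; exists (r / 2); first by rewrite divr_gt0.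
move=> x Kx; have r2 : `|r / 2| = r / 2 by rewrite gtr0_norm ?divr_gt0.
rewrite -r2; apply: (Kr (r / 2)) => //; last by rewrite r2 divr_gt0.
by rewrite /ball /= sub0r normrN r2; lra.
Qed.

Lemma compact_unif_edcont K h : compact K -> (forall x, K x -> edcont h x) ->
  forall e, 0 < e -> exists2 d, 0 < d &
    forall x, K x -> forall y, `|y - x| < d -> `|h y - h x| < e.
Proof.
move=> cK hK e e_gt0; apply: compact_uniform_radius => // x Kx.
have [d d_gt0 hd] := hK x Kx (e / 2) (ltac:(lra)).
exists (d / 2) => [|x' r x'x /andP[r_gt0 rd] y yx']; first lra.
have hx' : `|h x - h x'| < e / 2 by rewrite distrC; apply: hd; lra.
have hy : `|h y - h x| < e / 2.
  by apply: hd; apply: lt_le_trans (ltr_dist_trans yx' x'x) _; lra.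
by apply: lt_le_trans (ltr_dist_trans hy hx') _; lra.
Qed.

Lemma compact_open_margin K V h : compact K -> (forall x, K x -> edcont h x) ->
  open V -> (forall x, K x -> V (h x)) ->
  exists2 e, 0 < e & forall x, K x -> forall y, `|y - h x| < e -> V y.
Proof.
move=> cK hK oV hKV; apply: compact_uniform_radius => // x Kx.
have : open_nbhs (h x) V by split=> //; exact: hKV.
rewrite open_nbhsE => -[_] /nbhs_ballP [r /= r_gt0 rV].
have [d d_gt0 hd] := hK x Kx (r / 2) (ltac:(lra)).
exists (Num.min d (r / 2)) => [|x' e]; first by rewrite lt_min d_gt0 /=; lra.
rewrite !lt_min => /andP[x'd _] /andP[e_gt0 /andP[_ er]] y yx'.
apply: rV; rewrite /ball /= distrC.
by apply: lt_le_trans (ltr_dist_trans yx' (hd _ x'd)) _; lra.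
Qed.

End Compact.

Section CompactOpen.
Variable R : realType.

Lemma grid_cell (N : nat) (h v : R) : 0 < h -> (0 < N)%N -> 0 <= v <= N%:R * h ->
  exists2 i : 'I_N, i%:R * h <= v & v <= i.+1%:R * h.
Proof.
move=> h_gt0; elim: N => [//|N IH] _ /andP[v0 vN].
case: (posnP N) => [N0|N_gt0].
  by exists ord0; rewrite ?mul0r //; move: vN; rewrite N0.
case: (lerP v (N%:R * h)) => vN'.
  have [i ? ?] := IH N_gt0 (ltac:(by rewrite v0 vN')).
  by exists (widen_ord (leqnSn N) i).
by exists ord_max => //; rewrite ltW.
Qed.

Lemma fine_grid (a d : R) : 0 <= a -> 0 < d -> exists2 N : nat, (0 < N)%N & a / N%:R < d.
Proof.
move=> a_ge0 d_gt0; have ad_ge0 : 0 <= a / d by rewrite divr_ge0 // ltW.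
exists (Num.Def.archi_bound (a / d)).+1 => //.
rewrite ltr_pdivrMr ?ltr0n // mulrC -ltr_pdivrMr //.
by apply: lt_le_trans (archi_boundP ad_ge0) _; rewrite ler_nat.
Qed.

Lemma co_subbasis_sup_nbhd (a b : R) (psi : Gm a b) (e : R) : 0 < a -> 0 < e ->
  exists n (F : 'I_n -> set (Gm a b)),
    [/\ forall i, co_subbasis (F i), forall i, F i psi &
        forall f, (forall i, F i f) -> forall t, 0 <= t <= a -> `|sval f t - sval psi t| < e].
Proof.
move=> a_gt0 e_gt0; have psiG := svalP psi.
have [d d_gt0 psid] := compact_unif_edcont (@segment_compact R 0 a)
  (fun x _ => Gmor_edcont a_gt0 psiG x) (ltac:(lra) : 0 < e / 2).
have [N N_gt0 hd] := fine_grid (ltW a_gt0) d_gt0; set h := a / N%:R in hd.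
have h_gt0 : 0 < h by rewrite divr_gt0 ?ltr0n.
have Nh : N%:R * h = a by rewrite /h mulrC divfK // lt0r_neq0 ?ltr0n.
have cell_itv (i : 'I_N) t : i%:R * h <= t <= i.+1%:R * h -> 0 <= t <= a.
  move=> /andP[it ti]; rewrite -Nh; apply/andP; split.
    exact: le_trans (mulr_ge0 (ler0n _ _) (ltW h_gt0)) it.
  by apply: le_trans ti _; rewrite ler_pM2r // ler_nat.
have cell_near (i : 'I_N) t : i%:R * h <= t <= i.+1%:R * h ->
    `|sval psi (i%:R * h) - sval psi t| < e / 2.
  move=> it; rewrite distrC; apply: psid.
    by rewrite /= in_itv /=; apply: (cell_itv i); rewrite lexx ler_pM2r // ler_nat leqnSn.
  by move: it; rewrite -natr1 mulrDl mul1r => ?; rewrite ger0_norm; lra.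
exists N, (fun i : 'I_N => [set f : Gm a b | forall t, `[i%:R * h, i.+1%:R * h]%classic t ->
  (ball (sval psi (i%:R * h)) (e / 2) `&` [set u | 0 <= u <= b]) (sval f t)]).
split.
- move=> i; exists `[i%:R * h, i.+1%:R * h]%classic, (ball (sval psi (i%:R * h)) (e / 2)).
  split; first exact: (@segment_compact R _ _).
  split; first by move=> t /=; rewrite in_itv /=; exact: cell_itv.
  by split; first exact: ball_open.
- move=> i t /=; rewrite in_itv /= => it; split; first exact: cell_near.
  exact: Gmor_range a_gt0 psiG t.
- move=> f Ff t ta; have [i it ti] := @grid_cell N h t h_gt0 N_gt0 (ltac:(by rewrite Nh)).
  have it' : i%:R * h <= t <= i.+1%:R * h by rewrite it ti.
  have [fball _] := Ff i t (ltac:(by rewrite /= in_itv /=)).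
  rewrite [X in _ < X](splitr e); apply: ltr_dist_trans (cell_near i t it').
  by rewrite distrC.
Qed.

End CompactOpen.

Section SwapContinuity.
Variable R : realType.
Variables (L l1 l2 : R) (psi : R -> R).
Hypotheses (L_gt0 : 0 < L) (l1_gt0 : 0 < l1) (l2_gt0 : 0 < l2).
Hypothesis psiG : isGmor L (l1 + l2) psi.

Lemma splitpt_near r : 0 < r -> exists2 d, 0 < d & forall f, isGmor L (l1 + l2) f ->
  (forall t, 0 <= t <= L -> `|f t - psi t| < d) ->
  `|splitpt L l1 f - splitpt L l1 psi| < r.
Proof.
move=> r_gt0; have [/andP[a0 aL] psia _] := splitpt_spec L_gt0 l1_gt0 l2_gt0 psiG.
set a := splitpt L l1 psi in a0 aL psia *.
have [rho [rho_gt0 rho_r rho_a rho_La]] :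
    exists rho, [/\ 0 < rho, rho <= r, rho <= a & rho <= L - a].
  exists (Num.min r (Num.min a (L - a))).
  by rewrite !lt_min r_gt0 a0 subr_gt0 aL !ge_min !lexx ?orbT.
have lo : psi (a - rho) < l1 by rewrite -psia; apply: (Gmor_lt L_gt0 psiG); lra.
have hi : l1 < psi (a + rho) by rewrite -psia; apply: (Gmor_lt L_gt0 psiG); lra.
exists (Num.min (l1 - psi (a - rho)) (psi (a + rho) - l1)).
  by rewrite lt_min !subr_gt0 lo hi.
move=> f fG fd; have [/andP[n0 nL] fn _] := splitpt_spec L_gt0 l1_gt0 l2_gt0 fG.
set n := splitpt L l1 f in n0 nL fn *.
have flo := fd (a - rho) (ltac:(lra)); rewrite lt_min ltr_distlC in flo.
have fhi := fd (a + rho) (ltac:(lra)); rewrite lt_min [X in _ && X]ltr_distlC in fhi.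
case/andP: flo => /andP[lo1 lo2] _; case/andP: fhi => _ /andP[hi1 hi2].
have an : a - rho < n.
  rewrite ltNge; apply/negP => na.
  have := Gmor_mono fG (s := n) (t := a - rho); rewrite na; lra.
have na : n < a + rho.
  rewrite ltNge; apply/negP => an'.
  have := Gmor_mono fG (s := a + rho) (t := n); rewrite an'; lra.
by rewrite ltr_distlC; lra.
Qed.

Lemma swapmor_sup_near e : 0 < e -> exists2 d, 0 < d & forall f, isGmor L (l1 + l2) f ->
  (forall t, 0 <= t <= L -> `|f t - psi t| < d) ->
  forall t, 0 <= t <= L -> `|swapmor L l1 l2 f t - swapmor L l1 l2 psi t| < e.
Proof.
move=> e_gt0.
have psi_edcont y : edcont psi y := Gmor_edcont L_gt0 psiG y.
have psi_tens_edcont x : edcont (tens L (l1 + l2) psi psi) x.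
  apply: tens_edcont => //.
  by rewrite (Gmor_end L_gt0 psiG) (Gmor0 L_gt0 psiG) add0r.
have [d1 d1_gt0 psi_unif] := compact_unif_edcont (@segment_compact R 0 (2 * L))
  (fun x _ => psi_tens_edcont x) (ltac:(lra) : 0 < e / 2).
have [d2 d2_gt0 split_near] := splitpt_near d1_gt0.
exists (Num.min d2 (e / 2)) => [|f fG fd t tL]; first by rewrite lt_min d2_gt0; lra.
have fd2 s : 0 <= s <= L -> `|f s - psi s| < d2.
  by move=> /fd; rewrite lt_min => /andP[].
have fde s : 0 <= s <= L -> `|f s - psi s| < e / 2.
  by move=> /fd; rewrite lt_min => /andP[].
have [/andP[n0 nL] _ _] := splitpt_spec L_gt0 l1_gt0 l2_gt0 fG.
have [/andP[a0 aL] _ _] := splitpt_spec L_gt0 l1_gt0 l2_gt0 psiG.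
have na := split_near f fG fd2.
set n := splitpt L l1 f in n0 nL na *; set a := splitpt L l1 psi in a0 aL na *.
rewrite /swapmor -/n -/a clampR_id // opprB addrA subrK [X in _ < X](splitr e).
apply: (@ltr_dist_trans _ _ (tens L (l1 + l2) psi psi (t + n))).
- case: (lerP (t + n) L) => tnL; first by rewrite !tensE_le //; apply: fde; lra.
  rewrite !tensE_gt // subD2r; apply: fde; lra.
- apply: psi_unif; first by rewrite /= in_itv /=; lra.
  by rewrite (addrC t n) (addrC t a) subD2r.
Qed.

End SwapContinuity.

Section SwapHomeo.
Variable R : realType.

Lemma swapG_co_open (L l1 l2 : {posnum R}) (S : set (Gm L%:num (l2%:num + l1%:num))) :
  co_subbasis S ->
  gen_top (@co_subbasis R L%:num (l1%:num + l2%:num)) (@swapG R L l1 l2 @^-1` S).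
Proof.
move=> [K [V [cK [KL [oV ->]]]]] psi /= Spsi.
have [L_gt0 l1_gt0 l2_gt0] : [/\ 0 < L%:num, 0 < l1%:num & 0 < l2%:num] by [].
have swpsiG := svalP (swapG psi).
have [eta eta_gt0 etaV] := compact_open_margin cK
  (fun x _ => Gmor_edcont L_gt0 swpsiG x) oV (fun x Kx => (Spsi x Kx).1).
have [d d_gt0 swap_near] := swapmor_sup_near L_gt0 l1_gt0 l2_gt0 (svalP psi) eta_gt0.
have [n [F [coF Fpsi Fnear]]] := co_subbasis_sup_nbhd psi L_gt0 d_gt0.
exists n, F; do 2!split=> //; move=> f Ff t Kt; split.
- exact: etaV t Kt _ (swap_near _ (svalP f) (Fnear f Ff) t (KL t Kt)).
- exact: Gmor_range L_gt0 (svalP (swapG f)) t.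
Qed.

Lemma swapG_cont (L l1 l2 : {posnum R}) :
  cont (@Gtop R L%:num (l1%:num + l2%:num)) (@Gtop R L%:num (l2%:num + l1%:num))
    (@swapG R L l1 l2).
Proof. exact/deltaify_cont/cont_gen_top/swapG_co_open. Qed.

Lemma tens_swap_cont (D E : GSpace R) (L : {posnum R}) :
  cont (@tens_top R D E L) (@tens_top R E D L) (@tens_swap R D E L).
Proof.
move=> U oU [l1 l2].
have := cont_prod3_swap (oB := @open (gsp D l1)) (oC := @open (gsp E l2))
  (@swapG_cont L l1 l2) (oU (l2, l1)).
congr (prod3_top _ _ _ _ _); apply: funext => -[[psi x1] x2] /=.
by rewrite tens_swap_tproj.
Qed.

Lemma tens_swap_homeo (D E : GSpace R) (L : {posnum R}) :
  homeo (@tens_top R D E L) (@tens_top R E D L) (@tens_swap R D E L).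
Proof.
exists (@tens_swap R E D L); do !split; try exact: tens_swap_cont.
- exact: tens_swapK.
- exact: tens_swapK.
Qed.

End SwapHomeo.

Section NotNatural.
Variable R : realType.

Definition splits_at (D E : GSpace R) (L : {posnum R}) (t0 : R) (r : Raw D E L) :=
  sval (projT2 r).1.1 t0 = (projT1 r).1%:num.

Lemma splits_at_cstep (D E : GSpace R) (L : {posnum R}) t0 (r r' : Raw D E L) :
  cstep r r' -> splits_at t0 r <-> splits_at t0 r'.
Proof.
case=> m1 m2 l1 l2 phi1 phi2 psi psi' x1 x2 psi'E; rewrite /splits_at /= psi'E.
rewrite (tens_junctionP (gt0 m1) (gt0 m2) (svalP phi1) (svalP phi2)) //.
exact: Gmor_range (gt0 L) (svalP psi) t0.
Qed.

Lemma splits_at_tproj (D E : GSpace R) (L : {posnum R}) t0 (r r' : Raw D E L) :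
  tproj r = tproj r' -> splits_at t0 r <-> splits_at t0 r'.
Proof. by move=> e; exact: (crst_invariant (@splits_at_cstep D E L t0) (qproj_inj e)). Qed.

Definition point_space : topologicalType := discrete_topology unit.

Lemma point_delta_generated : delta_generated R point_space.
Proof.
apply: funext => U; apply: propext; split=> _; first exact: discrete_open.
exact/sub_deltaify/discrete_open.
Qed.

Lemma point_gact_cont (l1 l2 : {posnum R}) :
  cont (prod2_top R (@open point_space) (@Gtop R l1%:num l2%:num)) (@open point_space)
    (fun p => p.1).
Proof.
move=> U _; apply/sub_deltaify/gen_top_subbasis; left.
by exists U; split=> //; exact: discrete_open.
Qed.

Definition pointG : GSpace R := @Build_GSpace R (fun=> point_space) (fun _ _ x _ => x)
  (fun=> point_delta_generated) (fun _ _ _ _ => erefl) (fun _ _ _ _ _ _ _ _ => erefl)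
  point_gact_cont.

Definition id2 : R -> R := tens 1 1 (linmor 1 1) (linmor 1 1).
Definition bend : R -> R := tens 2^-1 1 (linmor 2^-1 1) (linmor (3 / 2) 1).
Definition bend_swap : R -> R := tens (3 / 2) 1 (linmor (3 / 2) 1) (linmor 2^-1 1).

Lemma id2_isGmor : isGmor 2 (1 + 1) id2.
Proof. by apply: tens_isGmor; rewrite ?ltr01 //; apply: linmor_isGmor; rewrite ltr01. Qed.

Lemma bend_isGmor : isGmor 2 2 bend.
Proof.
rewrite -[X in isGmor X](_ : 2^-1 + 3 / 2 = 2); last by field.
by apply: tens_isGmor; rewrite ?divr_gt0 ?invr_gt0 //; apply: linmor_isGmor;
  rewrite ?ltr01 ?divr_gt0 ?invr_gt0.
Qed.

Lemma bend_swap_isGmor : isGmor 2 (1 + 1) bend_swap.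
Proof.
rewrite -[X in isGmor X](_ : 3 / 2 + 2^-1 = 2); last by field.
by apply: tens_isGmor; rewrite ?divr_gt0 ?invr_gt0 //; apply: linmor_isGmor;
  rewrite ?ltr01 ?divr_gt0 ?invr_gt0.
Qed.

Lemma id2_id u : 0 <= u <= 2 -> id2 u = u.
Proof.
move=> /andP[u0 u2]; rewrite /id2 /tens /linmor divr1 !mul1r.
by case: ifP => u1; rewrite clampR_id ?subrK //; lra.
Qed.

Lemma bend_half : bend 2^-1 = 1.
Proof. by rewrite /bend tensE_le // /linmor clampR_id; [field | lra]. Qed.

Lemma bend_swap_half : bend_swap 2^-1 = 3^-1.
Proof. by rewrite /bend_swap tensE_le; [rewrite /linmor clampR_id; [field | lra] | lra]. Qed.

Let two : {posnum R} := 2%:pos.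
Let one : {posnum R} := 1%:pos.
Let half : {posnum R} := 2^-1%:pos.
Let three_halves : {posnum R} := (3 / 2)%:pos.

Lemma tens_swap_not_natural : exists D E : GSpace R,
  forall B : forall L : {posnum R}, TensG D E L -> TensG E D L,
    (forall L, induced_by_swap (B L)) -> ~ natural_swap B.
Proof.
exists pointG, pointG => B Bswap Bnat.
have lin (a : {posnum R}) : isGmor a%:num 1 (linmor a%:num 1).
  by apply: linmor_isGmor; rewrite ?ltr01.
pose idG : Gm two%:num (one%:num + one%:num) := exist _ id2 id2_isGmor.
pose bendG : Gm two%:num two%:num := exist _ bend bend_isGmor.
pose bendP : Gm two%:num (one%:num + one%:num) := exist _ bend bend_isGmor.
pose bend_swapP : Gm two%:num (one%:num + one%:num) :=
  exist _ bend_swap bend_swap_isGmor.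
pose q := tproj (@mkRaw R pointG pointG two one one idG tt tt).
pose q' := tproj (@mkRaw R pointG pointG two one one bendP tt tt).
have Bq : B two q = q := Bswap two one one one one idG tt tt _ _ idG erefl
  (lin one) (lin one) (fun=> erefl) (fun=> erefl).
have Bq' : B two q' = tproj (@mkRaw R pointG pointG two one one bend_swapP tt tt).
  apply: (Bswap two one one half three_halves bendP tt tt _ _ bend_swapP) => //=.
  - by field.
  - exact: lin half.
  - exact: lin three_halves.
have act : tens_act bendG q q'.
  exists one, one, idG, bendP, tt, tt; split=> // t /=.
  by rewrite id2_id // (Gmor_range _ bend_isGmor).
have [k1 [k2 [chi [chi' [y1 [y2 [chiE [Bq1 Bq'1]]]]]]]] := Bnat _ _ _ _ _ act.
have chi_splits : splits_at 1 (mkRaw chi y1 y2).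
  apply/(splits_at_tproj 1 (etrans (esym Bq) Bq1)).
  by rewrite /splits_at /= id2_id //; lra.
have : splits_at 2^-1 (mkRaw chi' y1 y2) by rewrite /splits_at /= chiE /= bend_half.
move/(splits_at_tproj 2^-1 (etrans (esym Bq') Bq'1)).
by rewrite /splits_at /= bend_swap_half; lra.
Qed.

End NotNatural.

Local Close Scope classical_set_scope.
Unset Implicit Arguments.

Theorem theorem4p9 (R : realType) :
  (forall (D E : GSpace R) (L : {posnum R}),
     exists B : TensG D E L -> TensG E D L,
       induced_by_swap B /\ homeo (@tens_top R D E L) (@tens_top R E D L) B)
  /\
  (exists D E : GSpace R,
     forall B : forall L : {posnum R}, TensG D E L -> TensG E D L,
       (forall L, induced_by_swap (B L)) -> ~ natural_swap B).
Proof.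
split; last exact: tens_swap_not_natural.
move=> D E L; exists (@tens_swap R D E L).
by split; [exact: tens_swap_induced | exact: tens_swap_homeo].
Qed.
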